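(* Let $n,l$ be positive integers and $p$ a prime such that $p^l$ divides $n$ but $p^{l+1}$ does not divide $n$. Let $S\subseteq\mathbb{Z}_n$ with $0\notin S$, $S=-S$, $|S|=p^l$, such that the circulant graph $\mathrm{Cay}(\mathbb{Z}_n,S)$ is connected. Then $\mathrm{Cay}(\mathbb{Z}_n,S)$ admits a total perfect code if and only if $s\not\equiv s' \pmod{p^l}$ for all distinct $s,s'\in S$.
   Context: $\mathbb{Z}_n$ is the additive group of integers modulo $n$; elements are identified with integers in $\{0,1,\dots,n-1\}$. For an inverse-closed subset $S$ of $\mathbb{Z}_n$ not containing $0$, the circulant graph $\mathrm{Cay}(\mathbb{Z}_n,S)$ has vertex set $\mathbb{Z}_n$, with $u,v$ adjacent iff $v-u\in S$; its degree is $|S|$. A total perfect code in a graph $\Gamma=(V,E)$ is a subset $C\subseteq V$ such that every vertex of $V$ has exactly one neighbour in $C$. *)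

From mathcomp Require Import all_boot.
Set Implicit Arguments. Unset Strict Implicit. Unset Printing Implicit Defensive.

(* Z_n is modelled by 'I_n with arithmetic modulo n on natural representatives. *)
Definition zsub (n : nat) (v u : 'I_n) : nat := (v + (n - u)) %% n.
Definition zopp (n : nat) (s : 'I_n) : nat := (n - s) %% n.

Definition inv_closed (n : nat) (S : {set 'I_n}) : Prop :=
  forall s : 'I_n, s \in S -> exists2 t : 'I_n, t \in S & val t = zopp s.

Definition cay_adj (n : nat) (S : {set 'I_n}) : rel 'I_n :=
  fun u v => [exists s in S, val s == zsub v u].

Definition cay_connected (n : nat) (S : {set 'I_n}) : Prop :=
  forall u v : 'I_n, connect (cay_adj S) u v.

Definition total_perfect_code (n : nat) (S : {set 'I_n}) (C : {set 'I_n}) : Prop :=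
  forall v : 'I_n, #|[set c in C | cay_adj S v c]| = 1.

From HB Require Import structures.
From mathcomp Require Import all_boot all_algebra all_fingroup all_solvable.
Set Implicit Arguments. Unset Strict Implicit. Unset Printing Implicit Defensive.
Import GRing.Theory.

(* A total perfect code C of Cay(Z_n, S) is a tiling Z_n = C + (-S), so
   |C| = n / p^l is prime to p.  Put q = p^l.  For every g, the rotations of
   Z_q permute the q-tuples of elements of C whose sum lies in g + S; there are
   |C|^(q-1) such tuples, a number prime to p, so one of them is fixed, i.e.
   constant: g = q c - s with c in C and s in S.  Since q c is a multiple of q,
   S meets every residue class mod q, and as |S| = q it meets each exactly once.
   Conversely, when S is a system of distinct residues mod q, the multiples of
   q form a total perfect code. *)

Lemma inj_in_imsetT (aT rT : finType) (f : aT -> rT) (A : {set aT}) :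
  #|A| = #|rT| -> {in A &, injective f} <-> f @: A = [set: rT].
Proof.
move=> cardA; split => [/imset_injP/eqP f_inj | fA].
  by apply/eqP; rewrite eqEcard subsetT cardsT /= f_inj cardA.
by apply/imset_injP; rewrite fA cardsT cardA.
Qed.

Section TranslationAction.

Variables (G : finGroupType) (T : finType).

Definition transl_ffun (f : {ffun G -> T}) (a : G) : {ffun G -> T} :=
  [ffun x => f (a * x)%g].

Lemma transl_ffun1 : transl_ffun^~ 1%g =1 id.
Proof. by move=> f; apply/ffunP => x; rewrite ffunE mul1g. Qed.

Lemma transl_ffunM f : act_morph transl_ffun f.
Proof. by move=> a b; apply/ffunP => x; rewrite !ffunE mulgA. Qed.

Definition transl_ffun_action := TotalAction transl_ffun1 transl_ffunM.

Lemma afix_transl_ffun f :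
  f \in ('Fix_(transl_ffun_action)([set: G]))%g -> forall x, f x = f 1%g.
Proof.
move=> /afixP fixed x.
by rewrite -[in RHS](fixed x (in_setT x)) ffunE mulg1.
Qed.

End TranslationAction.

Section Tilings.

Variable V : finZmodType.
Local Open Scope ring_scope.

(* Every [v] is [c - s] for a unique [c \in C], [s \in S]: V = C + (-S). *)
Definition tiles (C S : {set V}) :=
  forall v : V, exists! c, (c \in C) && (c - v \in S).

Lemma card_tiles C S : tiles C S -> (#|C| * #|S|)%N = #|V|.
Proof.
move=> tCS; rewrite -cardsX -cardsT.
have /imset_injP/eqP <- : {in setX C S &, injective (fun cs : V * V => cs.1 - cs.2)}.
  move=> [c s] [c' s']; rewrite !inE /= => /andP[cC sS] /andP[c'C s'S] eq_cs.
  have [c0 [_ uniq_c0]] := tCS (c - s).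
  have e1 : c0 = c by apply: uniq_c0; rewrite cC opprB addrC subrK.
  have e2 : c0 = c' by apply: uniq_c0; rewrite c'C eq_cs opprB addrC subrK.
  by move: eq_cs; rewrite -e1 -e2 => /addrI/oppr_inj ->.
suff -> : [set cs.1 - cs.2 | cs in setX C S] = [set: V] by [].
apply/setP => v; rewrite inE.
have [c [/andP[cC cvS] _]] := tCS v.
by apply/imsetP; exists (c, c - v); rewrite ?inE ?cC //= opprB addrC subrK.
Qed.

Section Multiplier.

Variables (C S : {set V}).
Hypothesis tCS : tiles C S.

Definition sum_in_tuples k g :=
  [set f : {ffun 'I_k.+1 -> V} | [forall i, f i \in C] && (\sum_i f i - g \in S)].

Lemma card_sum_in_tuples k g : #|sum_in_tuples k g| = (#|C| ^ k)%N.
Proof.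
pose tail (f : {ffun 'I_k.+1 -> V}) : {ffun 'I_k -> V} := [ffun j => f (lift ord0 j)].
have sumE (f : {ffun 'I_k.+1 -> V}) :
    \sum_i f i - g = f ord0 - (g - \sum_j f (lift ord0 j)).
  by rewrite big_ord_recl opprB addrA.
have tail_inj : {in sum_in_tuples k g &, injective tail}.
  move=> f1 f2; rewrite !inE !sumE => /andP[/forallP C1 S1] /andP[/forallP C2 S2] eq_tail.
  have eq_lift (j : 'I_k) : f1 (lift ord0 j) = f2 (lift ord0 j).
    by have := congr1 (fun h : {ffun 'I_k -> V} => h j) eq_tail; rewrite !ffunE.
  rewrite (eq_bigr _ (fun j _ => eq_lift j)) in S1.
  have [c [_ uniq_c]] := tCS (g - \sum_j f2 (lift ord0 j)).
  apply/ffunP => i; case: (unliftP ord0 i) => [j ->|->] //.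
  by rewrite -(uniq_c (f1 ord0)) ?C1 ?S1 //; apply: uniq_c; rewrite C2.
rewrite -(card_in_imset tail_inj) -[k in RHS]card_ord -card_ffun_on.
apply: eq_card => h; apply/imsetP/ffun_onP => [[f] | hC].
  by rewrite inE => /andP[/forallP fC _] -> j; rewrite ffunE.
have [c [/andP[cC cS] _]] := tCS (g - \sum_j h j).
exists [ffun i => if unlift ord0 i is Some j then h j else c].
  rewrite inE sumE ffunE unlift_none; under eq_bigr do rewrite ffunE liftK.
  rewrite cS andbT; apply/forallP => i; rewrite ffunE; case: unlift => //.
by apply/ffunP => j; rewrite !ffunE liftK.
Qed.

Lemma tiles_mulrn_cover p q g : prime p -> p.-nat q -> ~~ (p %| #|C|)%N ->
  exists2 c, c \in C & c *+ q - g \in S.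
Proof.
case: q => [//|k] p_pr p_q p'C.
pose to := transl_ffun_action 'I_k.+1 V.
have actsX : [acts [set: 'I_k.+1], on sum_in_tuples k g | to].
  apply/actsP => a _ f; rewrite !inE /=.
  have -> : \sum_i transl_ffun f a i = \sum_i f i.
    by rewrite [RHS](reindex_inj (mulgI a)); apply: eq_bigr => i _; rewrite ffunE.
  congr (_ && _); apply/forallP/forallP => fC i; last by rewrite ffunE.
  by have := fC (a^-1 * i)%g; rewrite ffunE mulKVg.
have p_grp : (p.-group [set: 'I_k.+1])%g by rewrite /pgroup cardsT card_ord.
have := pgroup_fix_mod p_grp actsX; rewrite card_sum_in_tuples.
case: (set_0Vmem ('Fix_(sum_in_tuples k g | to)([set: 'I_k.+1]))%g) => [-> | [f]].
  rewrite cards0 mod0n => C_k_p; have : (p %| #|C| ^ k)%N by rewrite /dvdn C_k_p.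
  by rewrite Euclid_dvdX // (negbTE p'C).
rewrite in_setI => /andP[+ /afix_transl_ffun f_const] _.
rewrite inE => /andP[/forallP fC sumS].
exists (f 1%g) => //.
by rewrite (eq_bigr _ (fun i _ => f_const i)) sumr_const card_ord in sumS.
Qed.

End Multiplier.

Section KernelTiling.

Variables (W : finZmodType) (rho : {additive V -> W}).

Lemma kernel_tiles (S : {set V}) :
  {in S &, injective rho} -> rho @: S = [set: W] -> tiles [set x | rho x == 0] S.
Proof.
move=> rho_inj rhoS v.
have /imsetP[s sS rho_s] : - rho v \in rho @: S by rewrite rhoS inE.
exists (v + s); split=> [|c /andP[]].
  by rewrite inE raddfD -rho_s subrr eqxx (addrC v) addrK sS.
rewrite inE => /eqP rho_c cvS.
have /(rho_inj _ _ cvS sS) <- : rho (c - v) = rho s by rewrite raddfB rho_c sub0r.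
by rewrite addrC subrK.
Qed.

Lemma kernel_cover_onto (S : {set V}) :
  (forall w, exists v, rho v = w) ->
  (forall v, exists2 d, rho d = 0 & d - v \in S) -> rho @: S = [set: W].
Proof.
move=> rho_onto cover; apply/setP => w; rewrite inE.
have [v rho_v] := rho_onto (- w).
have [d rho_d dvS] := cover v.
by apply/imsetP; exists (d - v); rewrite // raddfB rho_d rho_v sub0r opprK.
Qed.

End KernelTiling.

End Tilings.

Section CirculantGraphs.

Variable N : nat.
Local Open Scope ring_scope.

Lemma zsubE (v u : 'I_N.+1) : zsub v u = val (v - u).
Proof. by rewrite /zsub /= modnDmr. Qed.

Lemma cay_adjE (S : {set 'I_N.+1}) v c : cay_adj S v c = (c - v \in S).
Proof.
rewrite /cay_adj zsubE; apply/existsP/idP => [[s /andP[sS /eqP/val_inj <-]] // | cvS].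
by exists (c - v); rewrite cvS eqxx.
Qed.

Lemma total_perfect_codeP (S C : {set 'I_N.+1}) :
  total_perfect_code S C <-> tiles C S.
Proof.
split=> [tpc v | tCS v].
  have /eqP/cards1P[c Ec] := tpc v.
  have : c \in [set c in C | cay_adj S v c] by rewrite Ec set11.
  rewrite inE cay_adjE => cP; exists c; split=> // c' c'P.
  by apply/esym/set1P; rewrite -Ec inE cay_adjE.
have [c [cP uniq_c]] := tCS v.
apply/eqP/cards1P; exists c; apply/setP => c'; rewrite !inE cay_adjE.
by apply/idP/eqP => [/uniq_c | ->].
Qed.

End CirculantGraphs.

Section Residues.

Variables N k : nat.
Hypothesis k_dvd : (k.+1 %| N.+1)%N.

Local Open Scope ring_scope.

Definition residue (x : 'I_N.+1) : 'I_k.+1 := inZp x.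

Lemma residueD : {morph residue : x y / x + y}.
Proof. by move=> x y; apply/val_inj; rewrite /= modn_dvdm // modnDm. Qed.

Lemma residue_is_zmod_morphism : zmod_morphism residue.
Proof. by move=> x y; rewrite -[in RHS](subrK y x) (residueD (x - y)) addrK. Qed.

Definition residue_additive : {additive 'I_N.+1 -> 'I_k.+1} :=
  HB.pack residue (GRing.isZmodMorphism.Build _ _ residue residue_is_zmod_morphism).

Lemma residue_mulrn_modulus x : residue (x *+ k.+1) = 0.
Proof. by apply/val_inj; rewrite /= Zp_mulrn /= modn_dvdm // modnMl. Qed.

Lemma residue_onto w : exists v, residue v = w.
Proof.
by exists (inZp w); apply/val_inj; rewrite /= modn_dvdm // modn_small.
Qed.

Lemma distinct_residuesP (S : {set 'I_N.+1}) :
  (forall s s', s \in S -> s' \in S -> s != s' -> val s <> val s' %[mod k.+1]) <->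
  {in S &, injective residue}.
Proof.
split=> [distinct s s' sS s'S /(congr1 val) /= ss' | res_inj s s' sS s'S].
  by case: (eqVneq s s') => // /(distinct _ _ sS s'S).
by move=> /eqP + ss'; apply; apply: res_inj => //; apply: val_inj.
Qed.

End Residues.

Theorem theorem1p4 (n l p : nat) (S : {set 'I_n}) :
  0 < n -> 0 < l -> prime p ->
  p ^ l %| n -> ~~ (p ^ l.+1 %| n) ->
  (forall s : 'I_n, s \in S -> val s != 0) ->
  inv_closed S ->
  #|S| = p ^ l ->
  cay_connected S ->
  (exists C : {set 'I_n}, total_perfect_code S C) <->
  (forall s s' : 'I_n, s \in S -> s' \in S -> s != s' -> val s <> val s' %[mod p ^ l]).
Proof.
case: n S => [//|N] S _ _ p_pr.
have q_gt0 : 0 < p ^ l by rewrite expn_gt0 prime_gt0.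
case Eq : (p ^ l) q_gt0 => [//|k] _ q_dvd q1_ndvd _ _ cardS _.
have inj_onto : {in S &, injective (residue k)} <-> residue k @: S = [set: 'I_k.+1].
  by apply: inj_in_imsetT; rewrite cardS card_ord.
split=> [[C /total_perfect_codeP tCS] | /distinct_residuesP res_inj].
  apply/distinct_residuesP/inj_onto.
  have p'C : ~~ (p %| #|C|).
    have := card_tiles tCS; rewrite card_ord cardS => cardCS.
    by apply: contra q1_ndvd => pC; rewrite -cardCS expnSr Eq mulnC dvdn_mul.
  apply: (kernel_cover_onto (rho := residue_additive q_dvd) (residue_onto q_dvd)) => v.
  have p_q : p.-nat k.+1 by rewrite -Eq pnatX pnat_id.
  have [c _ cS] := tiles_mulrn_cover tCS v p_pr p_q p'C.
  by exists (c *+ k.+1)%R; first exact: residue_mulrn_modulus.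
exists [set x | residue k x == 0%R]; apply/total_perfect_codeP.
exact: (kernel_tiles (rho := residue_additive q_dvd)) res_inj (inj_onto.1 res_inj).
Qed.
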